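(* Let $G$ be an abelian group, let $H\leq G$ be a subgroup with $|H|\geq 3$, and let $Y\subseteq G$ be a finite subset such that $Y\setminus \{y_0\}$ is $H$-periodic (or empty) for some $y_0\in Y$. Then: 1. $Y$ is aperiodic, and $Y=(Y\setminus \{y_0\})\cup \{y_0\}$ is its unique reduced quasi-periodic decomposition. 2. If $Y=Y_1\cup Y_0$ is a $K$-quasi-periodic decomposition (for a nontrivial subgroup $K$, with $Y_0$ the part contained in a $K$-coset), then $y_0\in Y_0$ and $Y_0\setminus \{y_0\}$ is $H$-periodic; moreover, if $|Y_0|\geq 2$, then $H\leq K$. 3. If $A,B\subseteq G$ satisfy $A+B=Y$ and $|A+B|=|A|+|B|-1$, then there are $a_0\in A$ and $b_0\in B$ such that $A\setminus \{a_0\}$ and $B\setminus \{b_0\}$ are $H$-periodic and $a_0+b_0=y_0$.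
   Context: $\mathsf H(A)=\{g\in G:g+A=A\}$ is the stabilizer; $A$ is aperiodic if $\mathsf H(A)$ is trivial, periodic otherwise, and $H$-periodic if it is a union of $H$-cosets. A set $A$ is quasi-periodic if there is a subset $A_\emptyset\subseteq A$ such that $A\setminus A_\emptyset$ is nonempty and periodic and $A_\emptyset$ is contained in a single $\mathsf H(A\setminus A_\emptyset)$-coset. For a nontrivial subgroup $K$, a $K$-quasi-periodic decomposition of $A$ is a partition $A=(A\setminus A_\emptyset)\cup A_\emptyset$ with $A_\emptyset$ a subset of a $K$-coset and $A\setminus A_\emptyset$ $K$-periodic (or empty); a quasi-periodic decomposition is a $K$-quasi-periodic decomposition for some nontrivial $K$; it is reduced if $A_\emptyset$ is not quasi-periodic. $A+B=\{a+b:a\in A,b\in B\}$. *)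

From HB Require Import structures.
From mathcomp Require Import all_boot all_order all_algebra.
From mathcomp Require Export finmap.
Set Implicit Arguments. Unset Strict Implicit. Unset Printing Implicit Defensive.
Import GRing.Theory.
Local Open Scope ring_scope.
Local Open Scope fset_scope.

Section Defs.
Variable G : zmodType.

Definition is_subgroup (H : G -> Prop) : Prop :=
  H 0 /\ forall x y, H x -> H y -> H (x - y).

Definition nontrivial_subgroup (K : G -> Prop) : Prop :=
  is_subgroup K /\ exists k, K k /\ k <> 0.

Definition card_ge3 (H : G -> Prop) : Prop :=
  exists h1 h2 h3, [/\ H h1, H h2, H h3 & [/\ h1 <> h2, h1 <> h3 & h2 <> h3]].

Definition translate (g : G) (A : {fset G}) : {fset G} := [fset (g + a)%R | a in A].

Definition sumset (A B : {fset G}) : {fset G} := [fset (a + b)%R | a in A, b in B].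

Definition stab (A : {fset G}) (g : G) : Prop := translate g A = A.

Definition periodic (A : {fset G}) : Prop := exists g, g <> 0 /\ stab A g.

Definition aperiodic (A : {fset G}) : Prop := forall g, stab A g -> g = 0.

(* A is H-periodic: a union of H-cosets (the empty set is vacuously so) *)
Definition Hperiodic (H : G -> Prop) (A : {fset G}) : Prop :=
  forall a h, a \in A -> H h -> (a + h)%R \in A.

Definition in_one_coset (K : G -> Prop) (A0 : {fset G}) : Prop :=
  exists c, forall x, x \in A0 -> K (x - c)%R.

Definition quasi_periodic (A : {fset G}) : Prop :=
  exists A0 : {fset G},
    [/\ A0 `<=` A, A `\` A0 != fset0, periodic (A `\` A0)
      & in_one_coset (stab (A `\` A0)) A0].

Definition K_qp_decomp (K : G -> Prop) (A A1 A0 : {fset G}) : Prop :=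
  [/\ A1 `|` A0 = A, [disjoint A1 & A0], in_one_coset K A0 & Hperiodic K A1].

Definition qp_decomp (A A1 A0 : {fset G}) : Prop :=
  exists K, nontrivial_subgroup K /\ K_qp_decomp K A A1 A0.

Definition reduced_qp_decomp (A A1 A0 : {fset G}) : Prop :=
  qp_decomp A A1 A0 /\ ~ quasi_periodic A0.

End Defs.

From HB Require Import structures.
From mathcomp Require Import all_boot all_order all_algebra.
From mathcomp Require Import finmap boolp zify.
(* For h <> 0 in H the element y0 + h lies outside Y, while every other element
   of Y moves inside Y \ {y0} under H; the statements about aperiodicity and
   quasi-periodic decompositions come from playing these two facts against each
   other. For the sumset statement put U = A + H and V = B + H (H is finite, as
   it embeds into Y \ {y0} when the latter is nonempty). Every element of U + V
   lies in Y or in y0 + H, and a representation of y0 in U + V comes from one in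
   A + B, so Kemperman's inequality |U| + |V| <= |U + V| + r_{U,V}(y0), together
   with |A + H| >= |A| + r (|H| - 1) for r = r_{A,B}(y0), gives
   (r - 1) (|H| - 2) <= 0. Hence r = 1 because |H| >= 3, all the estimates are
   tight, and A + H is the union of A and a0 + H, which meet only in a0; this
   says that A \ {a0} is H-periodic. *)

Set Implicit Arguments.
Unset Strict Implicit.
Unset Printing Implicit Defensive.
Import GRing.Theory.
Local Open Scope fset_scope.
Local Open Scope ring_scope.

Lemma leq_fcard_in (T T' : choiceType) (f : T -> T') (X : {fset T}) (Z : {fset T'}) :
  {in X &, injective f} -> {in X, forall x, f x \in Z} -> (#|` X| <= #|` Z|)%N.
Proof.
move=> /card_in_imfsetP/eqP <- fXZ; rewrite fsubset_leq_card //.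
by apply/fsubsetP => _ /imfsetP [x /= xX ->]; apply: fXZ.
Qed.

Section Sumsets.
Variable G : zmodType.
Implicit Types (A B F R : {fset G}) (a b c e g x : G).

Lemma sumsetP A B x :
  reflect (exists a b, [/\ a \in A, b \in B & x = a + b]) (x \in sumset A B).
Proof.
apply: (iffP (imfset2P _ _ _ _ _)) => [[a aA [b bB ->]]|[a [b [aA bB ->]]]].
  by exists a, b.
by exists a => //; exists b.
Qed.

Lemma mem_sumset A B a b : a \in A -> b \in B -> a + b \in sumset A B.
Proof. by move=> aA bB; apply/sumsetP; exists a, b. Qed.

Lemma sumsetC A B : sumset A B = sumset B A.
Proof.
by apply/fsetP => x; apply/sumsetP/sumsetP => -[a [b [aA bB ->]]];
  exists b, a; rewrite addrC.
Qed.

Lemma mem_sumset1 c F x : (x \in sumset [fset c] F) = (x - c \in F).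
Proof.
apply/sumsetP/idP => [[_ [f [/fset1P -> fF ->]]]|xcF].
  by rewrite addrC addKr.
by exists c, (x - c); rewrite fset11 addrCA subrr addr0.
Qed.

Lemma mem_translate g A x : (x \in translate g A) = (x - g \in A).
Proof.
apply/imfsetP/idP => [[a /= aA ->]|xgA]; first by rewrite addrC addKr.
by exists (x - g); rewrite // addrC subrK.
Qed.

Lemma card_translate g A : #|` translate g A| = #|` A|.
Proof. by apply/eqP/card_in_imfsetP => x y _ _ /addrI. Qed.

Lemma stab_fsubset g A : translate g A `<=` A -> stab A g.
Proof. by move=> sub; apply/eqP; rewrite eqEfcard sub card_translate /=. Qed.

Lemma stab0 A : stab A 0.
Proof. by apply/fsetP => x; rewrite mem_translate subr0. Qed.

Lemma not_quasi_periodic_fset1 c : ~ quasi_periodic [fset c].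
Proof.
move=> [A0 [_ /fset0Pn [x xcA0] [g [g0 stabg]] _]].
have : g + x \in [fset c] `\` A0 by rewrite -stabg mem_translate addrC addKr.
move: xcA0 => /fsetDP [/fset1P -> _] /fsetDP [/fset1P gcc _].
by apply: g0; apply: (addIr c); rewrite add0r.
Qed.

Lemma card_sumset_direct R F :
  (forall x y f f', x \in R -> y \in R -> f \in F -> f' \in F ->
     x + f = y + f' -> x = y) ->
  #|` sumset R F| = (#|` R| * #|` F|)%N.
Proof.
move=> direct; rewrite /sumset (perm_size (enum_imfset2 _ _)) ?size_allpairs //.
move=> [x f] [y f'] /andP [/= xR fF] /andP [/= yR f'F] /= e.
have exy := direct _ _ _ _ xR yR fF f'F e; subst y.
by rewrite (addrI _ e).
Qed.

Lemma card_sumset1 c F : #|` sumset [fset c] F| = #|` F|.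
Proof.
by rewrite card_sumset_direct ?cardfs1 ?mul1n // => x y f f' /fset1P -> /fset1P ->.
Qed.

(* #|rep c A B| is the representation number r_{A,B}(c). *)
Definition rep c A B := [fset a in A | c - a \in B].

Lemma rep_sub c A B : rep c A B `<=` A.
Proof. by apply/fsubsetP => a /[!inE] /andP []. Qed.

Lemma leq_card_rep c A B : (#|` rep c A B| <= #|` rep c B A|)%N.
Proof.
apply: (leq_fcard_in (f := fun a => c - a)) => [a a' _ _ /addrI/oppr_inj //|].
by move=> a; rewrite !inE /= subKr => /andP [-> ->].
Qed.

Lemma card_repC c A B : #|` rep c A B| = #|` rep c B A|.
Proof. by apply/eqP; rewrite eqn_leq !leq_card_rep. Qed.

Section DysonTransform.
Variables (c e : G) (A B : {fset G}).
Let A' := A `|` translate e B.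
Let B' := [fset b in B | b + e \in A].

Lemma card_dyson : (#|` A'| + #|` B'| = #|` A| + #|` B|)%N.
Proof.
have AIeB : A `&` translate e B = translate e B'.
  by apply/fsetP => x; rewrite in_fsetI !mem_translate !inE /= subrK andbC.
by rewrite -(card_translate e B') -AIeB cardfsUI card_translate.
Qed.

Lemma dyson_sumset_sub : sumset A' B' `<=` sumset A B.
Proof.
apply/fsubsetP => _ /sumsetP [x [b [xA' /[!inE] /andP [bB beA] ->]]].
move: xA'; rewrite in_fsetU mem_translate => /orP [xA|xeB].
  exact: mem_sumset.
have -> : x + b = b + e + (x - e) by rewrite addrACA subrr addr0 addrC.
exact: mem_sumset.
Qed.

Lemma leq_card_rep_dyson : (#|` rep c A' B'| <= #|` rep c A B|)%N.
Proof.
pose f x := if x \in A then x else c - x + e.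
have fK x : c - (c - x + e) = x - e by rewrite opprD addrA subKr.
apply: (leq_fcard_in (f := f)) => [x y|x].
  rewrite !inE /f => /and3P [_ _ cxeA] /and3P [_ _ cyeA].
  case: ifP => xA; case: ifP => yA //.
  - by move=> exy; move: cxeA; rewrite exy fK subrK yA.
  - by move=> exy; move: cyeA; rewrite -exy fK subrK xA.
  - by move/addIr/addrI/oppr_inj.
rewrite !inE /f mem_translate => /and3P [/orP [xA|xeB] cxB cxeA].
  by rewrite xA /= xA cxB.
case: ifP => xA; first by rewrite xA cxB.
by rewrite cxeA fK xeB.
Qed.

End DysonTransform.

Theorem kemperman c A B : (exists2 a, a \in A & c - a \in B) ->
  (#|` A| + #|` B| <= #|` sumset A B| + #|` rep c A B|)%N.
Proof.
have [n] := ubnP #|` B|; elim: n A B => // n IHn A B ltBn [a aA].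
set b := c - a => bB.
(* Either A is (B - b)-stable, and then c - y = a - (y - b) lies in A for all
   y in B, or the Dyson transform with e = w - y strictly shrinks B. *)
have [Astab | /allPn [y yB /fsubsetPn [w wyA wA]]] :=
  boolP (all (fun y => translate (y - b) A `<=` A) B).
- apply: leq_add.
    apply: (leq_fcard_in (f := +%R^~ b)) => [x x' _ _ /addIr //|x xA].
    exact: mem_sumset.
  apply: (leq_fcard_in (f := fun y => c - y)) => [y y' _ _ /addrI/oppr_inj //|y yB].
  have /stab_fsubset stabA := allP Astab y yB.
  have : a \in translate (y - b) A by rewrite stabA.
  by rewrite !inE /= subKr yB mem_translate opprB addrA /b addrCA subrr addr0 andbT.
- set e := w - y.
  have beA : b + e \in A by rewrite addrCA -opprB -mem_translate.
  have yeA : y + e \notin A by rewrite addrC subrK.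
  set B' := [fset x in B | x + e \in A].
  have ltB'B : (#|` B'| < #|` B|)%N.
    apply: fproper_ltn_card; rewrite fproperE; apply/andP; split.
      by apply/fsubsetP => x /[!inE] /andP [].
    by apply/fsubsetPn; exists y; rewrite // !inE /= (negbTE yeA) andbF.
  have aA'bB' : exists2 x, x \in A `|` translate e B & c - x \in B'.
    by exists a; [rewrite in_fsetU aA | rewrite !inE /= -/b bB beA].
  have := IHn _ B' (leq_trans ltB'B (ltnSE ltBn)) aA'bB'.
  rewrite card_dyson => IH; apply: (leq_trans IH); apply: leq_add.
  + exact/fsubset_leq_card/dyson_sumset_sub.
  + exact: leq_card_rep_dyson.
Qed.

End Sumsets.

Section Subgroups.
Variables (G : zmodType) (H : G -> Prop).

Lemma Hperiodic_stab (A : {fset G}) h : Hperiodic H A -> H h -> stab A h.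
Proof.
move=> perA hH; apply: stab_fsubset; apply/fsubsetP => x.
by rewrite mem_translate => /perA /(_ hH); rewrite subrK.
Qed.

Lemma Hperiodic_finite (A : {fset G}) a :
  Hperiodic H A -> a \in A -> exists F : {fset G}, forall x, x \in F <-> H x.
Proof.
move=> perA aA; exists [fset x in translate (- a) A | `[< H x >]] => x.
rewrite !inE /= mem_translate opprK; split=> [/andP [_ /asboolP] //|xH].
by rewrite addrC perA //; apply/asboolP.
Qed.

Lemma card_ge3_nonzero : card_ge3 H ->
  exists h1 h2, [/\ H h1, H h2, h1 != 0, h2 != 0 & h1 != h2].
Proof.
move=> [h1 [h2 [h3 [h1H h2H h3H [/eqP h12 /eqP h13 /eqP h23]]]]].
have [h10|h10] := eqVneq h1 0.
  by exists h2, h3; split => //; rewrite -h10 eq_sym.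
have [h20|h20] := eqVneq h2 0; last by exists h1, h2.
by exists h1, h3; split => //; rewrite -h20 eq_sym.
Qed.

Lemma card_ge3_fset (F : {fset G}) :
  (forall x, x \in F <-> H x) -> card_ge3 H -> (3 <= #|` F|)%N.
Proof.
move=> memF [h1 [h2 [h3 [/memF h1F /memF h2F /memF h3F]]]].
move=> [/eqP h12 /eqP h13 /eqP h23].
apply: (@leq_trans #|` h1 |` (h2 |` [fset h3])|); last first.
  by apply/fsubset_leq_card/fsubsetP => x /[!inE] /orP [|/orP []] /eqP ->.
by rewrite !cardfsU1 cardfs1 !inE negb_or h12 h13 h23.
Qed.

Hypothesis subH : is_subgroup H.

Lemma subgroup0 : H 0.
Proof. by case: subH. Qed.

Lemma subgroupB x y : H x -> H y -> H (x - y).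
Proof. by case: subH => _; apply. Qed.

Lemma subgroupN x : H x -> H (- x).
Proof. by rewrite -sub0r; apply/subgroupB/subgroup0. Qed.

Lemma subgroupD x y : H x -> H y -> H (x + y).
Proof. by move=> xH /subgroupN yH; rewrite -[y]opprK; apply: subgroupB. Qed.

Lemma subgroup_coset x y c : H (x - c) -> H (y - c) -> H (x - y).
Proof. by move=> xcH ycH; have := subgroupB xcH ycH; rewrite opprB addrA subrK. Qed.

Lemma Hperiodic_fsetD1 (F A : {fset G}) a0 : (forall x, x \in F <-> H x) ->
  sumset A F `<=` A `|` sumset [fset a0] F ->
  A `&` sumset [fset a0] F `<=` [fset a0] -> Hperiodic H (A `\ a0).
Proof.
move=> memF AF_sub AI_sub a h /fsetD1P [aa0 aA] hH.
have aa0F : a - a0 \notin F.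
  apply: contra aa0 => aa0F; rewrite -in_fset1; apply: (fsubsetP AI_sub).
  by rewrite in_fsetI aA mem_sumset1.
have /(fsubsetP AF_sub) : a + h \in sumset A F by rewrite mem_sumset ?memF.
rewrite in_fsetU mem_sumset1 => /orP [ahA|/memF aha0H].
  rewrite in_fsetD1 ahA andbT; apply: contra aa0F => /eqP <-.
  by rewrite memF opprD addrA subrr add0r; apply: subgroupN.
by move/negP: aa0F; case; rewrite memF -(addrK h a) addrAC; apply: subgroupB.
Qed.

End Subgroups.

Section ExceptionalElement.
Variables (G : zmodType) (H : G -> Prop) (Y : {fset G}) (y0 : G).
Hypotheses (subH : is_subgroup H) (y0Y : y0 \in Y) (perY : Hperiodic H (Y `\ y0)).

Lemma addH_memD1 x h : x \in Y -> x != y0 -> H h -> x + h \in Y `\ y0.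
Proof. by move=> xY xy0; apply: perY; rewrite in_fsetD1 xy0. Qed.

Lemma addH_eq_y0 x h : x \in Y -> H h -> x + h = y0 -> x = y0.
Proof.
move=> xY hH xhy0; apply/eqP; apply: contraT => xy0.
by have := addH_memD1 xY xy0 hH; rewrite xhy0 in_fsetD1 eqxx.
Qed.

Lemma y0_addH_mem h : H h -> (y0 + h \in Y) = (h == 0).
Proof.
move=> hH; apply/idP/eqP => [y0hY|->]; last by rewrite addr0.
have := addH_eq_y0 y0hY (subgroupN subH hH) (addrK h y0).
by rewrite -[RHS]addr0 => /addrI.
Qed.

Lemma aperiodic_exceptional h : H h -> h != 0 -> aperiodic Y.
Proof.
move=> hH h0 g stabg; apply/eqP; apply: contraT => g0.
have y0gY : y0 - g \in Y by rewrite -mem_translate stabg.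
have y0g : y0 - g != y0 by rewrite -subr_eq0 addrAC subrr add0r oppr_eq0.
have : y0 + h \in Y.
  rewrite -stabg mem_translate addrAC.
  by have /fsetD1P [] := addH_memD1 y0gY y0g hH.
by rewrite y0_addH_mem // (negbTE h0).
Qed.

Lemma reduced_qp_decomp_exceptional h : H h -> h != 0 ->
  reduced_qp_decomp Y (Y `\ y0) [fset y0].
Proof.
move=> hH h0; split; last exact: not_quasi_periodic_fset1.
exists H; split; first by split; last by exists h; split; last exact/eqP.
split => //.
- by rewrite fsetUC fsetD1K.
- by rewrite fdisjointX1 in_fsetD1 eqxx.
- by exists y0 => _ /fset1P ->; rewrite subrr; apply: subgroup0.
Qed.

Section CosetDecomposition.
Variables (K : G -> Prop) (Y1 Y0 : {fset G}).
Hypotheses (ntK : nontrivial_subgroup K) (decY : K_qp_decomp K Y Y1 Y0).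

Lemma y0_mem_coset_part : card_ge3 H -> y0 \in Y0.
Proof.
move=> cardH; have [subK [k [kK k0]]] := ntK.
have [UY _ [c cosetY0] perY1] := decY.
have inY x : x \in Y1 -> x \in Y by rewrite -UY in_fsetU => ->.
apply: contraT => y0Y0.
have y0Y1 : y0 \in Y1 by move: y0Y; rewrite -UY in_fsetU (negbTE y0Y0) orbF.
have HK0 x : H x -> K x -> x == 0.
  by move=> xH xK; rewrite -(y0_addH_mem xH) inY ?perY1.
have y0kY : y0 + k \in Y by rewrite inY ?perY1.
have y0k : y0 + k != y0 by rewrite -subr_eq0 addrAC subrr add0r; apply/eqP.
have y0khY0 x : H x -> x != 0 -> y0 + k + x \in Y0.
  move=> xH x0; have /fsetD1P [_] := addH_memD1 y0kY y0k xH.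
  rewrite -UY in_fsetU => /orP [y0kxY1|//].
  have := perY1 _ _ y0kxY1 (subgroupN subK kK).
  by rewrite addrAC addrK => /inY; rewrite y0_addH_mem // (negbTE x0).
have [h1 [h2 [h1H h2H h10 h20 h12]]] := card_ge3_nonzero cardH.
have := subgroup_coset subK (cosetY0 _ (y0khY0 _ h1H h10))
                            (cosetY0 _ (y0khY0 _ h2H h20)).
rewrite [y0 + k + h1]addrC addrKA => /(HK0 _ (subgroupB subH h1H h2H)).
by rewrite subr_eq0 (negbTE h12).
Qed.

Hypothesis y0Y0 : y0 \in Y0.

Lemma Hperiodic_coset_partD1 : Hperiodic H (Y0 `\ y0).
Proof.
have [subK _] := ntK; have [UY disjY [c cosetY0] perY1] := decY.
move=> a h /fsetD1P [ay0 aY0] hH.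
have aY : a \in Y by rewrite -UY in_fsetU aY0 orbT.
have /fsetD1P [ahy0 ahY] := addH_memD1 aY ay0 hH.
rewrite in_fsetD1 ahy0 /=; move: ahY; rewrite -UY in_fsetU => /orP [ahY1|//].
have y0aK := subgroup_coset subK (cosetY0 _ y0Y0) (cosetY0 _ aY0).
have [h0|h0] := eqVneq h 0.
  by move: disjY => /fdisjointP /(_ _ ahY1); rewrite h0 addr0 aY0.
have := perY1 _ _ ahY1 y0aK; rewrite addrC addrA subrK => y0hY1.
by move: (y0_addH_mem hH); rewrite -UY in_fsetU y0hY1 (negbTE h0).
Qed.

Lemma subgroup_le_K : (1 < #|` Y0|)%N -> forall h, H h -> K h.
Proof.
have [subK _] := ntK; have [_ _ [c cosetY0] _] := decY.
rewrite (cardfsD1 y0) y0Y0 ltnS cardfs_gt0 => /fset0Pn [a aY0] h hH.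
have := Hperiodic_coset_partD1 aY0 hH.
move: aY0 => /fsetD1P [_ aY0] /fsetD1P [_ ahY0].
by have := subgroup_coset subK (cosetY0 _ ahY0) (cosetY0 _ aY0); rewrite addrC addKr.
Qed.

End CosetDecomposition.

Lemma reduced_qp_decomp_uniq Y1 Y0 : card_ge3 H ->
  reduced_qp_decomp Y Y1 Y0 -> Y1 = Y `\ y0 /\ Y0 = [fset y0].
Proof.
move=> cardH [[K [ntK decY]] nqpY0].
have y0Y0 := y0_mem_coset_part ntK decY cardH.
have [h [_ [hH _ h0 _ _]]] := card_ge3_nonzero cardH.
have Y0E : Y0 = [fset y0].
  apply/eqP; rewrite eqEfsubset fsub1set y0Y0 andbT.
  apply: contraT => /fsubsetPn [a aY0 ay0].
  case: nqpY0; exists [fset y0]; split.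
  - by rewrite fsub1set.
  - by apply/fset0Pn; exists a; rewrite in_fsetD ay0.
  - exists h; split; first exact/eqP.
    exact: Hperiodic_stab (Hperiodic_coset_partD1 ntK decY y0Y0) hH.
  - by exists y0 => _ /fset1P ->; rewrite subrr; apply: stab0.
split => //; have [UY disjY _ _] := decY.
apply/fsetP => x; rewrite in_fsetD1 -UY in_fsetU Y0E in_fset1.
have [-> /= | _] := eqVneq x y0; last by rewrite orbF.
apply: negbTE; apply/negP => y0Y1.
by move: disjY => /fdisjointP /(_ _ y0Y1); rewrite y0Y0.
Qed.

Section SumsetFactors.
Variables (A B F : {fset G}).
Hypotheses (sumAB : sumset A B `<=` Y) (memF : forall x, x \in F <-> H x).

Lemma rep_eq_modH x r : x \in A -> r \in rep y0 A B -> H (x - r) -> x = r.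
Proof.
move=> xA /[!inE] /andP [_ y0rB] xrH; apply/eqP; rewrite -subr_eq0.
by rewrite -(y0_addH_mem xrH) addrCA (fsubsetP sumAB) ?mem_sumset.
Qed.

Lemma card_sumset_rep :
  #|` sumset (rep y0 A B) F| = (#|` rep y0 A B| * #|` F|)%N.
Proof.
apply: card_sumset_direct => x y f f' /(fsubsetP (rep_sub _ _ _)) xA yR.
move=> /memF fH /memF f'H e; apply: (rep_eq_modH xA yR).
by rewrite -(addrKA f) e [f + y]addrC [y + f']addrC addrKA; apply: (subgroupB subH).
Qed.

Lemma fsetI_sumset_rep : A `&` sumset (rep y0 A B) F = rep y0 A B.
Proof.
apply/fsetP => x; rewrite in_fsetI; apply/andP/idP => [[xA]|xR].
  move=> /sumsetP [r [f [rR /memF fH xE]]].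
  by rewrite (rep_eq_modH xA rR) // xE addrC addKr.
split; first exact: (fsubsetP (rep_sub _ _ _) _ xR).
by rewrite -[x]addr0 mem_sumset // memF; apply: subgroup0.
Qed.

Lemma fsetU_sumset_rep_sub : A `|` sumset (rep y0 A B) F `<=` sumset A F.
Proof.
apply/fsubsetP => x /[!in_fsetU] /orP [xA|/sumsetP [r [f [rR fF ->]]]].
  by rewrite -[x]addr0 mem_sumset // memF; apply: subgroup0.
by rewrite mem_sumset // (fsubsetP (rep_sub _ _ _) _ rR).
Qed.

Lemma card_sumset_ge :
  (#|` A| + #|` rep y0 A B| * #|` F| <= #|` sumset A F| + #|` rep y0 A B|)%N.
Proof.
have := cardfsUI A (sumset (rep y0 A B) F).
rewrite fsetI_sumset_rep card_sumset_rep => <-.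
by rewrite leq_add2r fsubset_leq_card // fsetU_sumset_rep_sub.
Qed.

Lemma sumset_rep_tight :
  (#|` sumset A F| + #|` rep y0 A B| <= #|` A| + #|` rep y0 A B| * #|` F|)%N ->
  sumset A F = A `|` sumset (rep y0 A B) F.
Proof.
have := cardfsUI A (sumset (rep y0 A B) F).
rewrite fsetI_sumset_rep card_sumset_rep => <- le.
apply/eqP; rewrite eq_sym eqEfcard fsetU_sumset_rep_sub /=.
by rewrite -(leq_add2r #|` rep y0 A B|).
Qed.

Lemma rep_sumset_sub :
  rep y0 (sumset A F) (sumset B F) `<=` sumset (rep y0 A B) F.
Proof.
apply/fsubsetP => _ /[!inE] /andP [/sumsetP [a [f [aA fF ->]]]].
move=> /sumsetP [b [f' [bB /memF f'H abf]]].
have ff'H := subgroupD subH ((memF f).1 fF) f'H.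
have ab : a + b = y0.
  apply: (addH_eq_y0 (fsubsetP sumAB _ (mem_sumset aA bB)) ff'H).
  by rewrite addrACA -abf addrC subrK.
by rewrite mem_sumset // !inE /= aA -ab addrC addKr.
Qed.

Lemma sumset_sumset_sub :
  sumset (sumset A F) (sumset B F) `<=` Y `|` sumset [fset y0] F.
Proof.
apply/fsubsetP => z /sumsetP [u [v [/sumsetP [a [f [aA /memF fH ->]]]]]].
move=> /sumsetP [b [f' [bB /memF f'H ->]]] ->.
have ff'H := subgroupD subH fH f'H.
rewrite addrACA in_fsetU mem_sumset1.
have [-> | aby0] := eqVneq (a + b) y0.
  by rewrite [_ - y0]addrC addKr ((memF _).2 ff'H) orbT.
have abY := fsubsetP sumAB _ (mem_sumset aA bB).
by have /fsetD1P [_ ->] := addH_memD1 abY aby0 ff'H.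
Qed.

End SumsetFactors.

Lemma card_rep_eq1 A B F a0 b0 :
  (forall x, x \in F <-> H x) -> (3 <= #|` F|)%N ->
  sumset A B = Y -> #|` Y| = (#|` A| + #|` B| - 1)%N ->
  a0 \in A -> b0 \in B -> a0 + b0 = y0 ->
  #|` rep y0 A B| = 1%N /\
  (#|` sumset A F| + #|` rep y0 A B| <= #|` A| + #|` rep y0 A B| * #|` F|)%N.
Proof.
move=> memF F3 sumAB cardY a0A b0B a0b0.
have sumAB_sub : sumset A B `<=` Y by rewrite sumAB.
have sumBA_sub : sumset B A `<=` Y by rewrite sumsetC sumAB.
have F0 : 0 \in F by apply/memF; apply: subgroup0.
have a0AF : a0 \in sumset A F by rewrite -[a0]addr0 mem_sumset.
have b0BF : y0 - a0 \in sumset B F.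
  by rewrite -a0b0 addrC addKr -[b0]addr0 mem_sumset.
have kemp := kemperman (ex_intro2 _ _ a0 a0AF b0BF).
have cardUV : (#|` sumset (sumset A F) (sumset B F)| + 1 <= #|` Y| + #|` F|)%N.
  rewrite -(card_sumset1 y0 F) -cardfsUI.
  rewrite leq_add ?fsubset_leq_card ?sumset_sumset_sub // cardfs_gt0.
  by apply/fset0Pn; exists y0; rewrite in_fsetI y0Y mem_sumset1 subrr.
have repUV :
  (#|` rep y0 (sumset A F) (sumset B F)| <= #|` rep y0 A B| * #|` F|)%N.
  by rewrite -(card_sumset_rep sumAB_sub memF) fsubset_leq_card // rep_sumset_sub.
have lowA := card_sumset_ge sumAB_sub memF.
have lowB := card_sumset_ge sumBA_sub memF.
have repBA := card_repC y0 B A.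
have rep_gt0 : (0 < #|` rep y0 A B|)%N.
  rewrite cardfs_gt0.
  apply/fset0Pn; exists a0.
  by rewrite !inE /= a0A -a0b0 addrC addKr.
have A_gt0 : (0 < #|` A|)%N by rewrite cardfs_gt0; apply/fset0Pn; exists a0.
have B_gt0 : (0 < #|` B|)%N by rewrite cardfs_gt0; apply/fset0Pn; exists b0.
(* The estimates above combine to (r - 1) (#|F| - 2) <= 0, for r the size of
   rep y0 A B. *)
have rep1 : #|` rep y0 A B| = 1%N by nia.
by split=> //; rewrite rep1 in lowA lowB repUV repBA *; lia.
Qed.

Lemma Hperiodic_sumset_factorD1 A B a0 b0 : card_ge3 H ->
  sumset A B = Y -> #|` Y| = (#|` A| + #|` B| - 1)%N ->
  a0 \in A -> b0 \in B -> a0 + b0 = y0 -> Hperiodic H (A `\ a0).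
Proof.
move=> cardH sumAB cardY a0A b0B a0b0.
have [Yy0_0 | /fset0Pn [y1 y1Y]] := eqVneq (Y `\ y0) fset0.
  move=> a h /fsetD1P [aa0 aA] _.
  have : a + b0 \in Y `\ y0.
    by rewrite in_fsetD1 -a0b0 (inj_eq (addIr b0)) aa0 -sumAB mem_sumset.
  by rewrite Yy0_0.
have [F memF] := Hperiodic_finite perY y1Y.
have sumAB_sub : sumset A B `<=` Y by rewrite sumAB.
have [rep1 tight] :=
  card_rep_eq1 memF (card_ge3_fset memF cardH) sumAB cardY a0A b0B a0b0.
have repE : rep y0 A B = [fset a0].
  apply/esym/eqP; rewrite eqEfcard rep1 cardfs1 fsub1set !inE /= a0A.
  by rewrite -a0b0 addrC addKr b0B.
apply: (Hperiodic_fsetD1 subH memF); rewrite -repE.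
  by rewrite (sumset_rep_tight sumAB_sub memF tight).
by rewrite fsetI_sumset_rep.
Qed.

End ExceptionalElement.

Theorem lemma2p5 (G : zmodType) (H : G -> Prop) (Y : {fset G}) (y0 : G) :
  is_subgroup H -> card_ge3 H -> y0 \in Y -> Hperiodic H (Y `\ y0) ->
  [/\ (aperiodic Y /\ reduced_qp_decomp Y (Y `\ y0) [fset y0] /\
       forall Y1 Y0 : {fset G}, reduced_qp_decomp Y Y1 Y0 ->
         Y1 = Y `\ y0 /\ Y0 = [fset y0]),
      (forall (K : G -> Prop) (Y1 Y0 : {fset G}),
         nontrivial_subgroup K -> K_qp_decomp K Y Y1 Y0 ->
         [/\ y0 \in Y0, Hperiodic H (Y0 `\ y0)
           & (1 < #|` Y0|)%N -> forall h, H h -> K h])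
    & forall A B : {fset G},
        sumset A B = Y -> #|` sumset A B| = (#|` A| + #|` B| - 1)%N ->
        exists a0 b0, [/\ a0 \in A, b0 \in B, Hperiodic H (A `\ a0),
                          Hperiodic H (B `\ b0) & (a0 + b0)%R = y0]].
Proof.
move=> subH cardH y0Y perY.
have [h [_ [hH _ h0 _ _]]] := card_ge3_nonzero cardH.
split.
- split; first exact: (aperiodic_exceptional subH y0Y perY hH h0).
  split; first exact: (reduced_qp_decomp_exceptional subH y0Y perY hH h0).
  by move=> Y1 Y0; apply: (reduced_qp_decomp_uniq subH y0Y perY cardH).
- move=> K Y1 Y0 ntK decY.
  have y0Y0 := y0_mem_coset_part subH y0Y perY ntK decY cardH.
  split=> //; first exact: (Hperiodic_coset_partD1 subH y0Y perY ntK decY y0Y0).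
  exact: (subgroup_le_K subH y0Y perY ntK decY y0Y0).
- move=> A B sumAB; rewrite sumAB => cardY.
  move: (y0Y); rewrite -sumAB => /sumsetP [a0 [b0 [a0A b0B /esym a0b0]]].
  have sumBA : sumset B A = Y by rewrite sumsetC.
  have cardY' : #|` Y| = (#|` B| + #|` A| - 1)%N by rewrite addnC.
  have b0a0 : b0 + a0 = y0 by rewrite addrC.
  have factorD1 := Hperiodic_sumset_factorD1 subH y0Y perY.
  exists a0, b0; split => //.
  + exact: (factorD1 _ _ _ _ cardH sumAB cardY a0A b0B a0b0).
  + exact: (factorD1 _ _ _ _ cardH sumBA cardY' b0B a0A b0a0).
Qed.
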